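(* In the setting where delays are available at action time, run Skipper$(\beta,\mathrm{DEW}(\eta,\beta))$ tuned by the scheme Doubling described in the context. Then for every epoch $m$ that is not the final epoch, $$\mathrm{Bound}_m(\beta_m)\le 3\sqrt{\omega_m}\le 3\,\mathrm{Bound}_m(\beta_m^* )+2e^2K\ln K+1,$$ where $\beta_m^*\in\arg\min_{\beta>0}\mathrm{Bound}_m(\beta)$.
   Context: Setting: fix integers $K\ge 2$, $T\ge 1$, $[K]=\{1,\dots,K\}$. An oblivious adversary fixes in advance losses $\ell_t^a\in[0,1]$ and nonnegative integer delays $d_t$. In each round $t$ the delay $d_t$ is revealed to the learner at the beginning of the round (delay available at action time); the learner then picks (possibly at random) $A_t\in[K]$, suffers $\ell_t^{A_t}$, and at the end of round $t$ observes the pairs $(s,\ell_s^{A_s})$ for all $s\le t$ with $s+d_s=t$. Algorithm DEW with inputs $\eta>0$ and $d_{\max}$: $\eta'=\min\{\eta,(4e\,d_{\max})^{-1}\}$, $w_0^a=1$; in round $t$ play $A_t\sim p_t$ with $p_t^a=w_{t-1}^a/\sum_b w_{t-1}^b$; at the end of the round, for each received pair $(s,\ell_s^{A_s})$ form $\hat\ell_s^a=\ell_s^a\mathbb 1(a=A_s)/p_s^a$ and update $w_t^a=w_{t-1}^a\exp(-\eta'\sum_s\hat\ell_s^a)$ (sum over pairs received in round $t$). Skipper$(\beta,\mathcal A)$ plays the actions of the base algorithm $\mathcal A$ and forwards to $\mathcal A$ only the pairs $(s,\ell_s^{A_s})$ with $d_s<\beta$. Skipper$(\beta,\mathrm{DEW}(\eta,\beta))$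 uses DEW with learning rate $\eta$ and $d_{\max}=\beta$. Doubling: rounds are partitioned into consecutive epochs indexed by $m$, with $\omega_m=2^m$, $\beta_m=\sqrt{\omega_m}/(4e\ln K)$ and $\eta_m=1/(4e\beta_m)$; in each epoch a fresh copy of Skipper$(\beta_m,\mathrm{DEW}(\eta_m,\beta_m))$ is run. For epoch $m$ let $\sigma(m)$ be its number of rounds, $S^m_\beta$ the set of its rounds with $d_t\ge\beta$, and $D^m_\beta$ the sum of $d_t$ over its rounds with $d_t<\beta$. At the beginning of each round $t$, after $d_t$ is revealed, the algorithm stays in the current epoch $m$ if, with round $t$ included in epoch $m$, $$\max\Big\{|S^m_{\beta_m}|^2,\ \Big(\tfrac{eK\sigma(m)}{2}+D^m_{\beta_m}\Big)\ln K\Big\}\le\omega_m;$$ otherwise a new epoch (with a larger index) is started at round $t$, before $A_t$ is selected. For an epoch $m$ define $$\mathrm{Bound}_m(\beta)=|S^m_\beta|+4e\beta\ln K+\frac{\sigma(m)eK/2+D^m_\beta}{4e\beta}.$$ *)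

From Stdlib Require Import Reals Lra Lia.
Open Scope R_scope.

(* Rounds are numbered 1..T; an epoch is a block of consecutive rounds
   [a, b) = {a, ..., b-1}.  Delays are a sequence d : nat -> nat
   (d t = delay of round t), fixed in advance by the oblivious adversary. *)

Fixpoint sumR (f : nat -> R) (a n : nat) : R :=
  match n with
  | O => 0
  | S n' => f a + sumR f (S a) n'
  end.

Definition sigma_ep (a b : nat) : R := INR (b - a).

Definition S_card (d : nat -> nat) (a b : nat) (beta : R) : R :=
  sumR (fun t => if Rle_dec beta (INR (d t)) then 1 else 0) a (b - a).

Definition D_sum (d : nat -> nat) (a b : nat) (beta : R) : R :=
  sumR (fun t => if Rlt_dec (INR (d t)) beta then INR (d t) else 0) a (b - a).

Definition omega (m : nat) : R := 2 ^ m.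
Definition beta_m (K : nat) (m : nat) : R := sqrt (omega m) / (4 * exp 1 * ln (INR K)).
Definition eta_m (K : nat) (m : nat) : R := / (4 * exp 1 * beta_m K m).

Definition stay_cond (K : nat) (d : nat -> nat) (a b m : nat) : Prop :=
  Rmax ((S_card d a b (beta_m K m)) ^ 2)
       ((exp 1 * INR K * sigma_ep a b / 2 + D_sum d a b (beta_m K m)) * ln (INR K))
  <= omega m.

Definition Bound (K : nat) (d : nat -> nat) (a b : nat) (beta : R) : R :=
  S_card d a b beta + 4 * exp 1 * beta * ln (INR K)
  + (sigma_ep a b * exp 1 * INR K / 2 + D_sum d a b beta) / (4 * exp 1 * beta).

(* A run of Doubling on rounds 1..T with delays d: n epochs, epoch j
   occupies rounds [start j, start (j+1)) and has index idx j. *)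
Definition doubling_run (K T : nat) (d : nat -> nat) (n : nat)
    (start idx : nat -> nat) : Prop :=
  (1 <= n)%nat /\
  start 0%nat = 1%nat /\
  start n = S T /\
  (forall j, (j < n)%nat -> (start j < start (S j))%nat) /\
  (forall j, (S j < n)%nat -> (idx j < idx (S j))%nat) /\
  (* inside an epoch: at every round t of epoch j (including its first
     round) the condition, with round t included, holds *)
  (forall j t, (j < n)%nat -> (start j <= t < start (S j))%nat ->
     stay_cond K d (start j) (S t) (idx j)) /\
  (* a new epoch is started at round start (S j) because including that
     round in epoch j would violate the condition *)
  (forall j, (S j < n)%nat ->
     ~ stay_cond K d (start j) (S (start (S j))) (idx j)).

From Stdlib Require Import Reals Lra Lia.
Open Scope R_scope.

(* Write L = ln K, call sigma e K / 2 + D_beta the load of the epoch, and for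
   a threshold beta0 > 0 put c = 4 e beta0 L, so that
     Bound(beta) = S_beta + 4 e beta L + load(beta) / (4 e beta).
   - Upper estimate: if S_beta0^2 <= c^2 and load(beta0) L <= c^2 ("the epoch
     is balanced at beta0"), each of the three terms of Bound(beta0) is <= c.
   - Lower estimate: if one more round breaks one of these two inequalities,
     then Bound(beta) >= c up to an additive constant for EVERY beta > 0:
     for beta >= beta0 the linear term alone gives c; for beta < beta0 the
     broken S-inequality bounds S_beta from below (S_beta >= S_beta0), and the
     broken load inequality, with D_beta0 <= D_beta + beta0 S_beta, bounds the
     last term of Bound(beta) from below.
   For epoch m of Doubling, beta0 = beta_m gives c = sqrt omega_m; a non-final
   epoch satisfies the Doubling condition with its last round and violates it
   with the first round of the next epoch, which yields both inequalities of
   lemma5. *)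

Lemma sumR_snoc (f : nat -> R) (n a : nat) :
  sumR f a (S n) = sumR f a n + f (a + n)%nat.
Proof.
  revert a; induction n as [|n IH]; intro a.
  - simpl. rewrite Nat.add_0_r. ring.
  - change (sumR f a (S (S n))) with (f a + sumR f (S a) (S n)).
    rewrite IH. replace (S a + n)%nat with (a + S n)%nat by lia. simpl. ring.
Qed.

Lemma sumR_extend (f : nat -> R) (a b : nat) : (a <= b)%nat ->
  sumR f a (S b - a) = sumR f a (b - a) + f b.
Proof.
  intro Hab. replace (S b - a)%nat with (S (b - a)) by lia.
  rewrite sumR_snoc. do 2 f_equal. lia.
Qed.

Lemma sumR_le (f g : nat -> R) (n a : nat) :
  (forall t, f t <= g t) -> sumR f a n <= sumR g a n.
Proof.
  revert a; induction n as [|n IH]; intros a Hfg; simpl; [lra|].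
  specialize (IH (S a) Hfg). specialize (Hfg a). lra.
Qed.

Lemma sumR_nonneg (f : nat -> R) (n a : nat) :
  (forall t, 0 <= f t) -> 0 <= sumR f a n.
Proof.
  revert a; induction n as [|n IH]; intros a Hf; simpl; [lra|].
  specialize (IH (S a) Hf). specialize (Hf a). lra.
Qed.

Lemma sumR_plus (f g : nat -> R) (n a : nat) :
  sumR (fun t => f t + g t) a n = sumR f a n + sumR g a n.
Proof. revert a; induction n as [|n IH]; intro a; simpl; [ring|]. rewrite IH. ring. Qed.

Lemma sumR_scal (c : R) (f : nat -> R) (n a : nat) :
  sumR (fun t => c * f t) a n = c * sumR f a n.
Proof. revert a; induction n as [|n IH]; intro a; simpl; [ring|]. rewrite IH. ring. Qed.

Lemma sigma_ep_ge0 (a b : nat) : 0 <= sigma_ep a b.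
Proof. apply pos_INR. Qed.

Lemma S_card_ge0 (d : nat -> nat) (a b : nat) (beta : R) : 0 <= S_card d a b beta.
Proof. apply sumR_nonneg. intro t. destruct Rle_dec; lra. Qed.

Lemma D_sum_ge0 (d : nat -> nat) (a b : nat) (beta : R) : 0 <= D_sum d a b beta.
Proof. apply sumR_nonneg. intro t. destruct Rlt_dec; [apply pos_INR | lra]. Qed.

Lemma sigma_ep_extend (a b : nat) : (a <= b)%nat ->
  sigma_ep a (S b) = sigma_ep a b + 1.
Proof.
  intro Hab. unfold sigma_ep. replace (S b - a)%nat with (S (b - a)) by lia.
  apply S_INR.
Qed.

Lemma S_card_extend (d : nat -> nat) (a b : nat) (beta : R) : (a <= b)%nat ->
  S_card d a (S b) beta <= S_card d a b beta + 1.
Proof.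
  intro Hab. unfold S_card. rewrite sumR_extend by exact Hab.
  destruct (Rle_dec beta (INR (d b))); lra.
Qed.

Lemma D_sum_extend (d : nat -> nat) (a b : nat) (beta : R) :
  0 <= beta -> (a <= b)%nat -> D_sum d a (S b) beta <= D_sum d a b beta + beta.
Proof.
  intros Hbeta Hab. unfold D_sum. rewrite sumR_extend by exact Hab.
  destruct (Rlt_dec (INR (d b)) beta); lra.
Qed.

Lemma S_card_antitone (d : nat -> nat) (a b : nat) (beta1 beta2 : R) :
  beta1 <= beta2 -> S_card d a b beta2 <= S_card d a b beta1.
Proof.
  intro Hle. unfold S_card. apply sumR_le. intro t.
  destruct (Rle_dec beta1 (INR (d t))), (Rle_dec beta2 (INR (d t))); lra.
Qed.

(* Raising the threshold from beta1 to beta2 moves into D only delays of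
   rounds counted in S_beta1, each smaller than beta2. *)
Lemma D_sum_threshold (d : nat -> nat) (a b : nat) (beta1 beta2 : R) :
  0 <= beta1 -> beta1 <= beta2 ->
  D_sum d a b beta2 <= D_sum d a b beta1 + beta2 * S_card d a b beta1.
Proof.
  intros Hpos Hle. unfold D_sum, S_card. rewrite <- sumR_scal, <- sumR_plus.
  apply sumR_le. intro t. pose proof (pos_INR (d t)).
  destruct (Rlt_dec (INR (d t)) beta2), (Rlt_dec (INR (d t)) beta1),
    (Rle_dec beta1 (INR (d t))); lra.
Qed.

(* Numerical constants: e > 2 and ln K > 1/2 for K >= 2 make the scale c
   positive and absorb the additive constants of the lower estimate. *)

Lemma exp1_gt_2 : 2 < exp 1.
Proof. pose proof (exp_ineq1 1). lra. Qed.

Lemma ln_2_gt_half : 1/2 < ln 2.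
Proof.
  assert (Hsq : exp (1/2) * exp (1/2) = exp 1)
    by (rewrite <- exp_plus; f_equal; lra).
  assert (Hlt : exp (1/2) < 2)
    by (pose proof exp_le_3; pose proof (exp_pos (1/2)); nra).
  rewrite <- (ln_exp (1/2)). apply ln_increasing; [apply exp_pos | exact Hlt].
Qed.

Lemma INR_K_ge_2 (K : nat) : (2 <= K)%nat -> 2 <= INR K.
Proof. intro HK. apply (le_INR 2) in HK. simpl in HK. lra. Qed.

Lemma ln_K_gt_half (K : nat) : (2 <= K)%nat -> 1/2 < ln (INR K).
Proof.
  intro HK. pose proof ln_2_gt_half.
  destruct (Rle_lt_or_eq_dec 2 (INR K) (INR_K_ge_2 K HK)) as [Hlt | Heq].
  - pose proof (ln_increasing 2 (INR K) ltac:(lra) Hlt). lra.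
  - rewrite <- Heq. lra.
Qed.

Definition epoch_load (K : nat) (d : nat -> nat) (a b : nat) (beta : R) : R :=
  sigma_ep a b * exp 1 * INR K / 2 + D_sum d a b beta.

Lemma Bound_eq (K : nat) (d : nat -> nat) (a b : nat) (beta : R) :
  Bound K d a b beta = S_card d a b beta + 4 * exp 1 * beta * ln (INR K)
                       + epoch_load K d a b beta / (4 * exp 1 * beta).
Proof. reflexivity. Qed.

Lemma stay_load_eq (K : nat) (d : nat -> nat) (a b : nat) (beta : R) :
  exp 1 * INR K * sigma_ep a b / 2 + D_sum d a b beta = epoch_load K d a b beta.
Proof. unfold epoch_load. field. Qed.

Section Threshold.

Variables (K : nat) (d : nat -> nat) (a b : nat).
Hypothesis HK : (2 <= K)%nat.

Lemma epoch_load_ge0 (beta : R) : 0 <= epoch_load K d a b beta.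
Proof.
  unfold epoch_load.
  pose proof exp1_gt_2; pose proof (INR_K_ge_2 K HK).
  pose proof (D_sum_ge0 d a b beta); pose proof (sigma_ep_ge0 a b).
  assert (0 <= sigma_ep a b * exp 1 * INR K) by (apply Rmult_le_pos; nra).
  lra.
Qed.

Lemma Bound_tail_ge0 (beta : R) : 0 < beta ->
  0 <= epoch_load K d a b beta / (4 * exp 1 * beta).
Proof.
  intro Hbeta. pose proof exp1_gt_2. pose proof (epoch_load_ge0 beta).
  unfold Rdiv. apply Rmult_le_pos; [lra|].
  left. apply Rinv_0_lt_compat. nra.
Qed.

Lemma Bound_tail_antitone (beta beta0 : R) : 0 < beta <= beta0 ->
  epoch_load K d a b beta / (4 * exp 1 * beta0)
  <= epoch_load K d a b beta / (4 * exp 1 * beta).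
Proof.
  intros Hbeta. pose proof exp1_gt_2. pose proof (epoch_load_ge0 beta).
  unfold Rdiv. apply Rmult_le_compat_l; [lra|].
  apply Rinv_le_contravar; nra.
Qed.

Lemma Bound_ge_linear (beta : R) : 0 < beta ->
  4 * exp 1 * beta * ln (INR K) <= Bound K d a b beta.
Proof.
  intro Hbeta. rewrite Bound_eq.
  pose proof (S_card_ge0 d a b beta); pose proof (Bound_tail_ge0 beta Hbeta).
  lra.
Qed.

Lemma Bound_ge_nonlinear (beta : R) : 0 < beta ->
  S_card d a b beta + epoch_load K d a b beta / (4 * exp 1 * beta)
  <= Bound K d a b beta.
Proof.
  intro Hbeta. rewrite Bound_eq.
  pose proof exp1_gt_2; pose proof (ln_K_gt_half K HK).
  assert (0 <= 4 * exp 1 * beta * ln (INR K)) by (apply Rmult_le_pos; nra).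
  lra.
Qed.

Lemma Bound_balanced (beta0 : R) : 0 < beta0 ->
  let c := 4 * exp 1 * beta0 * ln (INR K) in
  S_card d a b beta0 ^ 2 <= c ^ 2 ->
  epoch_load K d a b beta0 * ln (INR K) <= c ^ 2 ->
  Bound K d a b beta0 <= 3 * c.
Proof.
  intros Hbeta0 c HS HD. rewrite Bound_eq. fold c.
  pose proof exp1_gt_2; pose proof (ln_K_gt_half K HK).
  pose proof (S_card_ge0 d a b beta0).
  assert (Hc : 0 < c) by (unfold c; apply Rmult_lt_0_compat; nra).
  assert (HSc : S_card d a b beta0 <= c) by nra.
  assert (Hmul : epoch_load K d a b beta0 / (4 * exp 1 * beta0) * c
                 = epoch_load K d a b beta0 * ln (INR K))
    by (unfold c; field; nra).
  assert (Htail : epoch_load K d a b beta0 / (4 * exp 1 * beta0) <= c) by nra.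
  lra.
Qed.

Lemma Bound_S_violation (beta0 beta : R) : 0 < beta <= beta0 -> (a <= b)%nat ->
  (4 * exp 1 * beta0 * ln (INR K)) ^ 2 < S_card d a (S b) beta0 ^ 2 ->
  4 * exp 1 * beta0 * ln (INR K) < Bound K d a b beta + 1.
Proof.
  intros Hbeta Hab Hviol.
  pose proof exp1_gt_2; pose proof (ln_K_gt_half K HK).
  pose proof (S_card_ge0 d a (S b) beta0).
  assert (Hc : 0 < 4 * exp 1 * beta0 * ln (INR K)) by (apply Rmult_lt_0_compat; nra).
  assert (HSc : 4 * exp 1 * beta0 * ln (INR K) < S_card d a (S b) beta0) by nra.
  pose proof (S_card_extend d a b beta0 Hab).
  pose proof (S_card_antitone d a b beta beta0 (proj2 Hbeta)).
  pose proof (Bound_ge_nonlinear beta (proj1 Hbeta)).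
  pose proof (Bound_tail_ge0 beta (proj1 Hbeta)).
  lra.
Qed.

Lemma epoch_load_extend (beta0 beta : R) : 0 < beta <= beta0 -> (a <= b)%nat ->
  epoch_load K d a (S b) beta0
  <= epoch_load K d a b beta + exp 1 * INR K / 2 + beta0 * (S_card d a b beta + 1).
Proof.
  intros [Hbeta Hle] Hab. unfold epoch_load.
  rewrite sigma_ep_extend by exact Hab.
  pose proof (D_sum_extend d a b beta0 ltac:(lra) Hab).
  pose proof (D_sum_threshold d a b beta beta0 ltac:(lra) Hle).
  lra.
Qed.

Lemma Bound_D_violation (beta0 beta : R) : 0 < beta <= beta0 -> (a <= b)%nat ->
  let c := 4 * exp 1 * beta0 * ln (INR K) in
  1 <= c ->
  c ^ 2 < epoch_load K d a (S b) beta0 * ln (INR K) ->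
  c <= Bound K d a b beta + exp 1 * INR K * ln (INR K) / 2 + 1/4.
Proof.
  intros Hbeta Hab c Hc Hviol.
  pose proof exp1_gt_2; pose proof (ln_K_gt_half K HK); pose proof (INR_K_ge_2 K HK).
  pose proof (epoch_load_extend beta0 beta Hbeta Hab).
  pose proof (Bound_ge_nonlinear beta (proj1 Hbeta)).
  pose proof (Bound_tail_antitone beta beta0 Hbeta).
  set (S0 := S_card d a b beta) in *.
  set (Y := epoch_load K d a b beta) in *.
  set (q0 := Y / (4 * exp 1 * beta0)) in *.
  assert (HS0 : 0 <= S0) by apply S_card_ge0.
  assert (Hq0 : q0 * c = Y * ln (INR K)) by (unfold q0, c; field; nra).
  set (ie := / (4 * exp 1)).
  assert (Hb : beta0 * ln (INR K) = c * ie) by (unfold ie, c; field; lra).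
  assert (Hie8 : 0 < ie <= 1/8).
  { split; [unfold ie; apply Rinv_0_lt_compat; lra|].
    assert (Hie : ie * (4 * exp 1) = 1) by (unfold ie; field; lra). nra. }
  assert (HKL : 0 <= exp 1 * INR K * ln (INR K)) by (apply Rmult_le_pos; nra).
  assert (Hsq : c * c < c * q0 + exp 1 * INR K * ln (INR K) / 2 + c * (S0 + 1) * ie).
  { assert (Hup : epoch_load K d a (S b) beta0 * ln (INR K)
                  <= Y * ln (INR K) + exp 1 * INR K * ln (INR K) / 2
                     + beta0 * ln (INR K) * (S0 + 1)).
    { replace (Y * ln (INR K) + exp 1 * INR K * ln (INR K) / 2
               + beta0 * ln (INR K) * (S0 + 1))
        with ((Y + exp 1 * INR K / 2 + beta0 * (S0 + 1)) * ln (INR K)) by field.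
      apply Rmult_le_compat_r; lra. }
    rewrite <- Hq0, Hb in Hup. simpl in Hviol. lra. }
  (* dividing by c >= 1 *)
  assert (Hc' : c <= q0 + exp 1 * INR K * ln (INR K) / 2 + S0 + 1/4).
  { assert ((S0 + 1) * ie <= S0 + 1/4) by nra.
    assert (0 <= (c - 1) * (exp 1 * INR K * ln (INR K))) by nra.
    nra. }
  lra.
Qed.

Lemma Bound_unbalanced (beta0 : R) : 0 < beta0 -> (a <= b)%nat ->
  let c := 4 * exp 1 * beta0 * ln (INR K) in
  1 <= c ->
  c ^ 2 < S_card d a (S b) beta0 ^ 2 \/
  c ^ 2 < epoch_load K d a (S b) beta0 * ln (INR K) ->
  forall beta : R, 0 < beta ->
  3 * c <= 3 * Bound K d a b beta + 2 * exp 1 ^ 2 * INR K * ln (INR K) + 1.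
Proof.
  intros Hbeta0 Hab c Hc Hviol beta Hbeta.
  pose proof exp1_gt_2; pose proof (ln_K_gt_half K HK); pose proof (INR_K_ge_2 K HK).
  assert (HKL : 1 <= INR K * ln (INR K)) by nra.
  assert (Hconst : 3/2 * exp 1 * INR K * ln (INR K) + 3
                   <= 2 * exp 1 ^ 2 * INR K * ln (INR K) + 1).
  { assert (0 <= (exp 1 - 1) * exp 1 * (INR K * ln (INR K))) by
      (apply Rmult_le_pos; nra).
    simpl. nra. }
  assert (0 <= exp 1 * (INR K * ln (INR K))) by (apply Rmult_le_pos; lra).
  destruct (Rle_lt_dec beta0 beta) as [Hle | Hlt].
  - (* large beta: the linear term of Bound(beta) alone exceeds c *)
    pose proof (Bound_ge_linear beta Hbeta).
    assert (0 <= 4 * exp 1 * ln (INR K) * (beta - beta0))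
      by (apply Rmult_le_pos; nra).
    unfold c. lra.
  - destruct Hviol as [HS | HD].
    + pose proof (Bound_S_violation beta0 beta ltac:(lra) Hab HS). unfold c. lra.
    + pose proof (Bound_D_violation beta0 beta ltac:(lra) Hab Hc HD). unfold c. lra.
Qed.

End Threshold.

Lemma sqrt_omega_ge_1 (m : nat) : 1 <= sqrt (omega m).
Proof.
  rewrite <- sqrt_1. apply sqrt_le_1_alt. apply pow_R1_Rle. lra.
Qed.

Lemma sqrt_omega_sq (m : nat) : sqrt (omega m) ^ 2 = omega m.
Proof. simpl. rewrite Rmult_1_r. apply sqrt_sqrt. unfold omega. apply pow_le. lra. Qed.

Lemma beta_m_pos (K m : nat) : (2 <= K)%nat -> 0 < beta_m K m.
Proof.
  intro HK. pose proof exp1_gt_2; pose proof (ln_K_gt_half K HK);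
    pose proof (sqrt_omega_ge_1 m).
  unfold beta_m. apply Rdiv_lt_0_compat; nra.
Qed.

Lemma beta_m_scale (K m : nat) : (2 <= K)%nat ->
  4 * exp 1 * beta_m K m * ln (INR K) = sqrt (omega m).
Proof.
  intro HK. pose proof exp1_gt_2; pose proof (ln_K_gt_half K HK).
  unfold beta_m. field. split; lra.
Qed.

Lemma epoch_upper (K : nat) (d : nat -> nat) (a b m : nat) : (2 <= K)%nat ->
  stay_cond K d a b m -> Bound K d a b (beta_m K m) <= 3 * sqrt (omega m).
Proof.
  intros HK Hstay. unfold stay_cond in Hstay. rewrite stay_load_eq in Hstay.
  rewrite <- (beta_m_scale K m HK).
  apply Bound_balanced; [exact HK | apply beta_m_pos, HK | |];
    rewrite beta_m_scale, sqrt_omega_sq by exact HK.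
  - exact (Rle_trans _ _ _ (Rmax_l _ _) Hstay).
  - exact (Rle_trans _ _ _ (Rmax_r _ _) Hstay).
Qed.

Lemma epoch_lower (K : nat) (d : nat -> nat) (a b m : nat) :
  (2 <= K)%nat -> (a <= b)%nat -> ~ stay_cond K d a (S b) m ->
  forall beta : R, 0 < beta ->
  3 * sqrt (omega m)
  <= 3 * Bound K d a b beta + 2 * exp 1 ^ 2 * INR K * ln (INR K) + 1.
Proof.
  intros HK Hab Hviol. unfold stay_cond in Hviol. rewrite stay_load_eq in Hviol.
  rewrite <- (beta_m_scale K m HK).
  apply Bound_unbalanced; [exact HK | apply beta_m_pos, HK | exact Hab | |].
  - rewrite beta_m_scale by exact HK. apply sqrt_omega_ge_1.
  - rewrite beta_m_scale, sqrt_omega_sq by exact HK.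
    destruct (Rlt_or_le (omega m) (S_card d a (S b) (beta_m K m) ^ 2)) as [HS | HS];
      [now left|].
    destruct (Rlt_or_le (omega m) (epoch_load K d a (S b) (beta_m K m) * ln (INR K)))
      as [HD | HD]; [now right|].
    exfalso. apply Hviol, Rmax_lub; assumption.
Qed.

Lemma doubling_nonfinal_epoch (K T : nat) (d : nat -> nat) (n : nat)
    (start idx : nat -> nat) (j : nat) :
  doubling_run K T d n start idx -> (S j < n)%nat ->
  (start j < start (S j))%nat /\
  stay_cond K d (start j) (start (S j)) (idx j) /\
  ~ stay_cond K d (start j) (S (start (S j))) (idx j).
Proof.
  intros [_ [_ [_ [Hinc [_ [Hstay Hnew]]]]]] Hj.
  assert (Hab : (start j < start (S j))%nat) by (apply Hinc; lia).
  split; [exact Hab | split; [| exact (Hnew j Hj)]].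
  specialize (Hstay j (start (S j) - 1)%nat ltac:(lia) ltac:(lia)).
  replace (S (start (S j) - 1)) with (start (S j)) in Hstay by lia.
  exact Hstay.
Qed.

Theorem lemma5 (K T : nat) (d : nat -> nat) (n : nat) (start idx : nat -> nat) :
  (2 <= K)%nat -> (1 <= T)%nat ->
  doubling_run K T d n start idx ->
  forall j : nat, (S j < n)%nat ->
    let a := start j in
    let b := start (S j) in
    let m := idx j in
    Bound K d a b (beta_m K m) <= 3 * sqrt (omega m) /\
    (forall beta_star : R,
       0 < beta_star ->
       (forall beta : R, 0 < beta -> Bound K d a b beta_star <= Bound K d a b beta) ->
       3 * sqrt (omega m)
       <= 3 * Bound K d a b beta_star + 2 * (exp 1) ^ 2 * INR K * ln (INR K) + 1).
Proof.
  intros HK _ Hrun j Hj a b m.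
  destruct (doubling_nonfinal_epoch K T d n start idx j Hrun Hj)
    as [Hab [Hstay Hviol]].
  split.
  - exact (epoch_upper K d a b m HK Hstay).
  - (* the lower estimate holds for every beta > 0, in particular for beta_star *)
    intros beta_star Hpos _.
    exact (epoch_lower K d a b m HK (Nat.lt_le_incl _ _ Hab) Hviol beta_star Hpos).
Qed.
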